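(* Let $K$ be a totally real number field of degree $n$. Suppose an integer plane $A\subseteq\mathbb{R}^n$ is contained in the hyperplane $\{x\in\mathbb{R}^n:\sum_{i=1}^n\tau_i(\delta)x_i=k\}$ for some $\delta\in\mathcal{O}_K^\vee$ and some $k>0$. Then $\mathrm{ID}(A)$ is a divisor of $k$. In particular, if $A$ is contained in such a hyperplane with $k=1$, then $\mathrm{ID}(A)=1$.
   Context: $\tau_1,\dots,\tau_n$ are the real embeddings of $K$; the Minkowski embedding is $\iota_M:K\to\mathbb{R}^n$, $\alpha\mapsto(\tau_1(\alpha),\dots,\tau_n(\alpha))$, and $\Lambda=\iota_M(\mathcal{O}_K)$. The codifferent is $\mathcal{O}_K^\vee=\{\delta\in K:\operatorname{Tr}_{K/\mathbb{Q}}(\delta\alpha)\in\mathbb{Z}\ \forall\alpha\in\mathcal{O}_K\}$. An integer plane is an affine subspace $A\subseteq\mathbb{R}^n$ such that $A\cap\Lambda$ spans (affinely) a lattice of rank equal to $\dim A$. For an integer plane $A$ not containing the origin, its integer distance $\mathrm{ID}(A)$ is the index of the subgroup generated by $A\cap\Lambda$ in the lattice $\Lambda\cap\operatorname{Span}_{\mathbb{R}}(A)$. *)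

From HB Require Import structures.
From mathcomp Require Import all_boot all_order all_algebra all_field.
From mathcomp Require Import reals.
Set Implicit Arguments. Unset Strict Implicit. Unset Printing Implicit Defensive.
Import Order.TTheory GRing.Theory Num.Theory.
Local Open Scope ring_scope.

Section Defs.
Variable K : fieldExtType rat.

Definition trKQ (x : K) : rat :=
  \tr (passmx.mxof (vbasis fullv) (vbasis fullv) (amulr x)).

Definition ring_of_integers (x : K) : Prop :=
  exists p : {poly int}, p \is monic /\ root (map_poly (intr : int -> K) p) x.

Definition codifferent (d : K) : Prop :=
  forall a : K, ring_of_integers a -> trKQ (d * a) \is a Num.int.

Variable R : realType.
Variable n : nat.
Variable tau : 'I_n -> {rmorphism K -> R}.

Definition minkowski (a : K) : 'rV[R]_n := \row_i tau i a.

Definition Lambda (x : 'rV[R]_n) : Prop :=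
  exists a : K, ring_of_integers a /\ x = minkowski a.
End Defs.

Section Geom.
Variables (R : realType) (n : nat).
Implicit Types (S A L G : 'rV[R]_n -> Prop).

Definition affine_subspace_dir A (p : 'rV[R]_n) (V : 'M[R]_n) : Prop :=
  forall x, A x <-> (x - p <= V)%MS.

Definition lin_span S (x : 'rV[R]_n) : Prop :=
  exists m (c : 'I_m -> R) (y : 'I_m -> 'rV[R]_n),
    (forall j, S (y j)) /\ x = \sum_j c j *: y j.

Definition gen_subgroup S (x : 'rV[R]_n) : Prop :=
  exists m (c : 'I_m -> int) (y : 'I_m -> 'rV[R]_n),
    (forall j, S (y j)) /\ x = \sum_j y j *~ c j.

Definition gen_diff_subgroup S (x : 'rV[R]_n) : Prop :=
  exists m (c : 'I_m -> int) (y z : 'I_m -> 'rV[R]_n),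
    (forall j, S (y j) /\ S (z j)) /\ x = \sum_j (y j - z j) *~ c j.

(* G is a subgroup of L and the index [L : G] equals m: there are m
   representatives of pairwise distinct cosets covering L. *)
Definition has_index L G (m : nat) : Prop :=
  (forall x, G x -> L x) /\
  exists r : 'I_m -> 'rV[R]_n,
    (forall i, L (r i)) /\
    (forall i j, G (r i - r j) -> i = j) /\
    (forall x, L x -> exists i, G (x - r i)).

(* Integer plane w.r.t. the lattice Lam: A is an affine subspace with
   direction V such that A ∩ Lam affinely spans a lattice of rank dim A
   = \rank V, i.e. the group of differences of points of A ∩ Lam
   (a subgroup of the lattice Lam - Lam, hence discrete) has real rank
   \rank V: its real span is V. *)
Definition integer_plane (Lam : 'rV[R]_n -> Prop) A : Prop :=
  exists (p : 'rV[R]_n) (V : 'M[R]_n),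
    affine_subspace_dir A p V /\
    (exists x0, A x0 /\ Lam x0) /\
    (forall v, (v <= V)%MS <->
       lin_span (gen_diff_subgroup (fun x => A x /\ Lam x)) v).

Definition integer_distance (Lam : 'rV[R]_n -> Prop) A (m : nat) : Prop :=
  has_index (fun x => Lam x /\ lin_span A x)
            (gen_subgroup (fun x => A x /\ Lam x)) m.
End Geom.

From HB Require Import structures.
From mathcomp Require Import all_boot all_order all_algebra all_field.
From mathcomp Require Import reals.
From mathcomp Require Import boolp.
Set Implicit Arguments. Unset Strict Implicit. Unset Printing Implicit Defensive.
Import Order.TTheory GRing.Theory Num.Theory.
Local Open Scope ring_scope.

(* The functional f x := \sum_i tau_i(delta) x_i takes integer values on
   Lambda, because f (iota a) = Tr (delta a) once the trace is written as the
   sum of the n embeddings (which needs their linear independence).  On the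
   points L of Lambda lying in Span A the values of f form a group dZ with
   d > 0, and the group generated by the lattice points of A is exactly the
   part of L where f lies in kZ: a point of L at level s k differs from s x0,
   for a lattice point x0 of A, by a combination of total weight 0, which lies
   in the direction of A.  Hence ID(A) = [dZ : kZ] and k = ID(A) d. *)

Definition is_subgroup (V : zmodType) (G : V -> Prop) : Prop :=
  G 0 /\ forall x y, G x -> G y -> G (x - y).

Section Subgroup.
Variables (V : zmodType) (G : V -> Prop).
Hypothesis hG : is_subgroup G.

Lemma subgroupN x : G x -> G (- x).
Proof. by move=> Gx; rewrite -sub0r; apply: hG.2 => //; apply: hG.1. Qed.

Lemma subgroupD x y : G x -> G y -> G (x + y).
Proof. by move=> Gx Gy; rewrite -[y]opprK; apply: hG.2 => //; apply: subgroupN. Qed.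

Lemma subgroupMz x (c : int) : G x -> G (x *~ c).
Proof.
move=> Gx; have GMn k : G (x *+ k).
  by elim: k => [|k IHk]; rewrite ?mulr0n ?mulrS; [apply: hG.1 | apply: subgroupD].
by case: c => k; rewrite ?NegzE ?mulrNz; [apply: GMn | apply/subgroupN/GMn].
Qed.

Lemma subgroup_sum (I : Type) (r : seq I) (P : pred I) (F : I -> V) :
  (forall i, P i -> G (F i)) -> G (\sum_(i <- r | P i) F i).
Proof. by move=> GF; apply: big_ind => //; [apply: hG.1 | apply: subgroupD]. Qed.

End Subgroup.

Lemma subgroupI (V : zmodType) (G H : V -> Prop) :
  is_subgroup G -> is_subgroup H -> is_subgroup (fun x => G x /\ H x).
Proof.
move=> [G0 GB] [H0 HB]; split=> // x y [Gx Hx] [Gy Hy].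
by split; [apply: GB | apply: HB].
Qed.

Lemma int_subgroup_cyclic (H : int -> Prop) (z0 : int) :
  is_subgroup H -> H z0 -> 0 < z0 ->
  exists2 d : nat, (0 < d)%N & H d /\ forall z, H z -> (d %| z)%Z.
Proof.
move=> hH Hz0 z0_gt0.
pose P d := (0 < d)%N && `[< H d >].
have [|d /andP[d_gt0 /asboolP Hd] d_min] := ex_minnP (P := P).
  by exists `|z0|%N; rewrite /P absz_gt0 gtz0_abs ?gt_eqF //; apply/asboolP.
exists d => //; split=> // z Hz; apply: contraT => ndz.
have Hr : H (z %% d)%Z.
  have -> : (z %% d)%Z = z - (z %/ d)%Z * d.
    by apply/eqP; rewrite eq_sym subr_eq addrC -divz_eq.
  by apply: hH.2 => //; rewrite mulrC -mulrzz; apply: subgroupMz.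
have r_gt0 : (0 < `|(z %% d)%Z|)%N.
  by rewrite absz_gt0; apply: contra ndz => /eqP/dvdz_mod0P.
have r_ge0 : 0 <= (z %% d)%Z by rewrite modz_ge0 // eqz_nat -lt0n.
have /d_min : P `|(z %% d)%Z|%N by rewrite /P r_gt0; apply/asboolP; rewrite gez0_abs.
by rewrite leqNgt -ltz_nat gez0_abs // ltz_pmod.
Qed.

Section Span.
Variables (R : realType) (n : nat) (S : 'rV[R]_n -> Prop).

Lemma lin_span_of x : S x -> lin_span S x.
Proof.
by move=> Sx; exists 1%N, (fun=> 1), (fun=> x); rewrite big_ord1 scale1r.
Qed.

Lemma lin_spanZ c x : lin_span S x -> lin_span S (c *: x).
Proof.
move=> [m [a [y [Sy ->]]]]; exists m, (fun j => c * a j), y; split=> //.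
by rewrite scaler_sumr; apply: eq_bigr => j _; rewrite scalerA.
Qed.

Lemma lin_spanD x y : lin_span S x -> lin_span S y -> lin_span S (x + y).
Proof.
move=> [m1 [a1 [y1 [Sy1 ->]]]] [m2 [a2 [y2 [Sy2 ->]]]].
exists (m1 + m2)%N, (fun j => match split j with inl i => a1 i | inr i => a2 i end),
  (fun j => match split j with inl i => y1 i | inr i => y2 i end).
split; first by move=> j; case: (split j).
by rewrite big_split_ord; congr (_ + _); apply: eq_bigr => j _;
  rewrite ?(unsplitK (inl _)) ?(unsplitK (inr _)).
Qed.

Lemma lin_span_subgroup : is_subgroup (lin_span S).
Proof.
split; first by exists 0%N, (fun=> 0), (fun=> 0); split=> [[]|]; rewrite ?big_ord0.
by move=> x y Sx Sy; rewrite -scaleN1r; apply: lin_spanD => //; apply: lin_spanZ.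
Qed.

Lemma gen_subgroup_min (G : 'rV[R]_n -> Prop) x :
  is_subgroup G -> (forall y, S y -> G y) -> gen_subgroup S x -> G x.
Proof.
move=> hG SG [m [c [y [Sy ->]]]].
by apply: (subgroup_sum hG) => j _; apply/(subgroupMz hG)/SG.
Qed.

End Span.

Section Dedekind.
Variables (K : nzRingType) (F : idomainType) (n : nat).
Variable tau : 'I_n -> {rmorphism K -> F}.
Hypothesis tau_inj : forall i j, (forall a, tau i a = tau j a) -> i = j.

(* Artin's argument, as in [gal_independent_contra]: subtracting [tau_i a]
   times the relation from the relation twisted by [a] kills the [i]-th
   term but not the [j]-th one, and induction on the support applies. *)
Lemma embeddings_independent_contra (P : pred 'I_n) (c : 'I_n -> F) i :
  P i -> c i != 0 -> exists a, \sum_(j | P j) c j * tau j a != 0.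
Proof.
have [m] := ubnP #|P|; elim: m c i P => // m IHm c i P lePm Pi nz_ci.
rewrite ltnS (cardD1x Pi) in lePm; move/IHm: lePm => {m IHm}/= IH_P.
have [/eqfun_inP c_Pi'_0 | ] := boolP [forall (j | P j && (j != i)), c j == 0].
  exists 1; rewrite (bigD1 i Pi) /= rmorph1 mulr1.
  by rewrite big1 ?addr0 // => j /c_Pi'_0->; rewrite mul0r.
case/forall_inPn => j Pi'j nz_cj.
have /existsNP[a /eqP nz_jia] : ~ forall a, tau j a = tau i a.
  by move/tau_inj/eqP; apply/negP; case/andP: Pi'j.
pose d j := c j * (tau j a - tau i a).
have /IH_P[//|b nz_sumb] : d j != 0 by rewrite mulf_neq0 // subr_eq0.
have [sumb_0|] := eqVneq (\sum_(k | P k) c k * tau k b) 0; last by exists b.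
exists (a * b).
rewrite -subr_eq0 -[z in _ - z](mulr0 (tau i a)) -[in z in _ - z]sumb_0.
rewrite mulr_sumr -sumrB (bigD1 i Pi) rmorphM /= mulrCA subrr add0r.
congr (_ != 0): nz_sumb; apply: eq_bigr => k _.
by rewrite mulrCA rmorphM -mulrBr -mulrBl mulrA.
Qed.

Lemma embeddings_independent (c : 'I_n -> F) :
  (forall a, \sum_j c j * tau j a = 0) -> forall i, c i = 0.
Proof.
move=> sum_c_0 i; apply/eqP/idPn => /(embeddings_independent_contra (erefl : predT i))[a].
by rewrite sum_c_0 eqxx.
Qed.

End Dedekind.

Section Trace.
Variables (K : fieldExtType rat) (F : numFieldType).
Local Notation d := (\dim {:K}).
Variable tau : 'I_d -> {rmorphism K -> F}.
Hypothesis tau_inj : forall i j, (forall a, tau i a = tau j a) -> i = j.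
Local Notation e := (vbasis {:K}).

Lemma rmorph_coord (t : {rmorphism K -> F}) a :
  t a = \sum_j ratr (coord e j a) * t e`_j.
Proof.
rewrite {1}(coord_vbasis (memvf a)) rmorph_sum; apply: eq_bigr => j _.
rewrite -mulr_algl rmorphM; congr (_ * _).
exact: (fmorph_eq_rat (t \o in_alg K)).
Qed.

Definition embedding_mx : 'M[F]_d := \matrix_(i, j) tau j e`_i.

Lemma mxof_amulr_embedding x :
  map_mx ratr (passmx.mxof e e (amulr x)) *m embedding_mx =
  embedding_mx *m diag_mx (\row_j tau j x).
Proof.
apply/matrixP => i j; rewrite mul_mx_diag !mxE -rmorphM rmorph_coord.
apply: eq_bigr => k _.
by rewrite /embedding_mx /passmx.mxof !mxE /= passmx.vecof_delta !lfunE.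
Qed.

Lemma embedding_mx_unit : embedding_mx \in unitmx.
Proof.
rewrite -unitmx_tr -row_free_unit; apply: inj_row_free => v vP0.
apply/rowP => i; rewrite mxE; apply: (embeddings_independent tau_inj) => a.
under eq_bigr do rewrite rmorph_coord mulr_sumr.
rewrite exchange_big big1 // => k _.
transitivity (ratr (coord e k a) * (v *m embedding_mx^T) 0 k).
  by rewrite mxE mulr_sumr; apply: eq_bigr => j _; rewrite !mxE mulrCA.
by rewrite vP0 mxE mulr0.
Qed.

Lemma trKQ_embeddings x : ratr (trKQ x) = \sum_i tau i x.
Proof.
rewrite /trKQ -(trace_map_mx ratr).
have -> : map_mx ratr (passmx.mxof e e (amulr x)) =
    embedding_mx *m diag_mx (\row_j tau j x) *m invmx embedding_mx.
  by rewrite -mxof_amulr_embedding mulmxK // embedding_mx_unit.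
rewrite mxtrace_mulC mulmxA mulVmx ?embedding_mx_unit // mul1mx mxtrace_diag.
by apply: eq_bigr => j _; rewrite mxE.
Qed.

End Trace.

Section IntegerPlane.
Variables (R : realType) (n : nat).

Definition weighted_sum (w : 'I_n -> R) (x : 'rV[R]_n) : R^o := \sum_i w i * x 0 i.

Fact weighted_sum_is_linear w : linear (weighted_sum w).
Proof.
move=> c x y; rewrite /weighted_sum scaler_sumr -big_split.
by apply: eq_bigr => i _; rewrite !mxE mulrDr mulrCA.
Qed.

HB.instance Definition _ w :=
  GRing.isLinear.Build R 'rV[R]_n R^o _ (weighted_sum w) (weighted_sum_is_linear w).

Variable w : 'I_n -> R.
Local Notation f := (weighted_sum w).

Lemma level_gen_subgroup (S : 'rV[R]_n -> Prop) (k : R) x :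
  (forall y, S y -> f y = k) -> gen_subgroup S x -> exists s : int, f x = k *~ s.
Proof.
move=> fS [m [c [y [Sy ->]]]]; exists (\sum_j c j).
by rewrite raddf_sum mulrz_sumr; apply: eq_bigr => j _; rewrite raddfMz /= fS.
Qed.

Lemma has_index_level (L G : 'rV[R]_n -> Prop) xd (d m : nat) :
  is_subgroup L -> L xd -> f xd = d%:~R -> (0 < d)%N -> (0 < m)%N ->
  (forall x, L x -> exists t : int, f x = (d%:Z * t)%:~R) ->
  (forall x, G x <-> L x /\ exists s : int, f x = (m%:Z * d%:Z * s)%:~R) ->
  has_index L G m.
Proof.
move=> hL Lxd fxd d_gt0 m_gt0 fL GE.
have fxdMz (t : int) : f (xd *~ t) = (d%:Z * t)%:~R by rewrite raddfMz /= fxd -mulrzr intrM.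
split=> [x /GE[] // | ].
exists (fun i : 'I_m => xd *~ i); split=> [i | ]; first exact: subgroupMz.
split=> [i j /GE[_ [s]] | x /[dup] Lx /fL[t ft]].
  have d_neq0 : d%:Z != 0 by rewrite eqz_nat -lt0n.
  rewrite -mulrzBr fxdMz => /intr_inj; rewrite mulrC mulrAC => /(mulIf d_neq0) ij.
  apply/val_inj/eqP; rewrite -eqz_nat.
  have : (i%:Z == j %[mod m])%Z by rewrite eqz_mod_dvd ij dvdz_mulr.
  by rewrite !modz_small ?ltz_nat ?ltn_ord.
have r_ge0 : 0 <= (t %% m)%Z by rewrite modz_ge0 // eqz_nat -lt0n.
have r_lt_m : (`|(t %% m)%Z| < m)%N by rewrite -ltz_nat gez0_abs // ltz_pmod.
exists (Ordinal r_lt_m); apply/GE; split; first by apply: hL.2 => //; apply: subgroupMz.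
exists (t %/ m)%Z; rewrite raddfB /= ft fxdMz /= gez0_abs // -intrB -mulrBr.
by rewrite {1}(divz_eq t m) addrK mulrCA mulrC (mulrC d%:Z).
Qed.

Section Plane.
Variables (A : 'rV[R]_n -> Prop) (p : 'rV[R]_n) (V : 'M[R]_n) (k : R).
Hypotheses (hdir : affine_subspace_dir A p V) (fA : forall x, A x -> f x = k).
Hypothesis k_neq0 : k != 0.

(* f x is k times the total weight of the combination, which must vanish. *)
Lemma lin_span_ker_sub x : lin_span A x -> f x = 0 -> (x <= V)%MS.
Proof.
move=> [m [c [y [Ay ->]]]].
rewrite linear_sum (eq_bigr (fun j => c j * k)) => [|j _]; last by rewrite linearZ /= fA.
rewrite -mulr_suml => /eqP; rewrite mulf_eq0 (negPf k_neq0) orbF => /eqP sum_c0.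
have -> : \sum_j c j *: y j = \sum_j c j *: (y j - p).
  by rewrite (eq_bigr _ (fun j _ => scalerBr _ _ _)) sumrB -scaler_suml sum_c0 scale0r subr0.
by apply: summx_sub => j _; apply/scalemx_sub/(hdir _).1.
Qed.

Lemma gen_subgroup_level (Lam : 'rV[R]_n -> Prop) x0 x (s : int) :
  is_subgroup Lam -> A x0 -> Lam x0 -> Lam x -> lin_span A x -> f x = k *~ s ->
  gen_subgroup (fun y => A y /\ Lam y) x.
Proof.
move=> hLam Ax0 Lx0 Lx Sx fx.
pose v := x - x0 *~ s.
have Sv : lin_span A v.
  by apply: (lin_span_subgroup A).2 => //; apply/(subgroupMz (lin_span_subgroup A))/lin_span_of.
have Vv : (v <= V)%MS by apply: lin_span_ker_sub; rewrite // raddfB raddfMz /= fx fA // subrr.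
have Av : A (x0 + v).
  by apply/(hdir _).2; rewrite addrAC; apply: addmx_sub => //; apply/(hdir _).1.
have Lv : Lam (x0 + v) by apply: subgroupD => //; apply: hLam.2 => //; apply: subgroupMz.
exists 2%N, (fun j : 'I_2 => if j == ord0 then 1 else s - 1),
  (fun j : 'I_2 => if j == ord0 then x0 + v else x0).
split; first by move=> j; case: ifP.
rewrite !big_ord_recl big_ord0 /= addr0 mulr1z mulrzBr mulr1z /v.
by rewrite addrC addrA subrK addrC subrK.
Qed.

End Plane.

Theorem integer_distance_dvd (Lam A : 'rV[R]_n -> Prop) (k : R) :
  is_subgroup Lam -> (forall x, Lam x -> f x \is a Num.int) ->
  integer_plane Lam A -> 0 < k -> (forall x, A x -> f x = k) ->
  exists m d : nat, integer_distance Lam A m /\ k = m%:R * d%:R.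
Proof.
move=> hLam f_int [p [V [hdir [[x0 [Ax0 Lamx0]] _]]]] k_gt0 fA.
pose L x := Lam x /\ lin_span A x.
have hL : is_subgroup L := subgroupI hLam (lin_span_subgroup A).
have Lx0 : L x0 by split=> //; apply: lin_span_of.
pose H (z : int) := exists2 x, L x & f x = z%:~R.
have hH : is_subgroup H.
  split=> [|z1 z2 [x Lx fx] [y Ly fy]]; first by exists 0; [apply: hL.1 | rewrite raddf0].
  by exists (x - y); [apply: hL.2 | rewrite raddfB /= fx fy intrB].
have /intrP[K fx0] := f_int x0 Lamx0.
have K_gt0 : 0 < K by rewrite -(ltr0z R) -fx0 fA.
have [d d_gt0 [[xd Lxd fxd] d_dvd]] := int_subgroup_cyclic hH (ex_intro2 _ _ x0 Lx0 fx0) K_gt0.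
have fL x : L x -> exists t : int, f x = (d%:Z * t)%:~R.
  move=> Lx; have /intrP[z fz] := f_int x Lx.1.
  have /dvdzP[t zE] : (d %| z)%Z by apply: d_dvd; exists x.
  by exists t; rewrite fz zE mulrC.
have [t ft] := fL x0 Lx0.
have t_gt0 : 0 < t.
  by rewrite -(@pmulr_rgt0 _ d%:Z) ?ltz_nat // -(ltr0z R) -ft fA.
have kE : k = (`|t|%N%:Z * d%:Z)%:~R by rewrite -(fA _ Ax0) ft gtz0_abs // mulrC.
exists `|t|%N, d; split; last by rewrite kE intrM.
apply: (has_index_level hL Lxd fxd d_gt0 _ fL) => [|x]; first by rewrite absz_gt0 gt_eqF.
split=> [Gx | [[Lx Sx] [s fx]]].
  split; first by apply: (gen_subgroup_min hL _ Gx) => y [Ay Ly]; split; last apply: lin_span_of.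
  have [s fs] := level_gen_subgroup (fun y Sy => fA y (proj1 Sy)) Gx.
  by exists s; rewrite fs kE -mulrzr -intrM.
apply: (gen_subgroup_level hdir fA _ hLam Ax0 Lamx0 Lx Sx (s := s)); first exact: lt0r_neq0.
by rewrite fx kE -[RHS]mulrzr -intrM.
Qed.

End IntegerPlane.

Section Minkowski.
Variables (K : fieldExtType rat) (R : realType) (n : nat).
Variable tau : 'I_n -> {rmorphism K -> R}.

Lemma ring_of_integersP (a : K) :
  ring_of_integers a <-> integralOver (intr : {rmorphism int -> K}) a.
Proof. by split=> [[p [mon_p root_p]] | [p mon_p root_p]]; exists p. Qed.

Lemma Lambda_subgroup : is_subgroup (Lambda tau).
Proof.
split.
  exists 0; split; first exact/ring_of_integersP/integral0.
  by apply/rowP => i; rewrite !mxE rmorph0.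
move=> _ _ [a [Oa ->]] [b [Ob ->]]; exists (a - b); split.
  by apply/ring_of_integersP/integral_sub; apply/ring_of_integersP.
by apply/rowP => i; rewrite !mxE rmorphB.
Qed.

End Minkowski.

Lemma codifferent_weighted_sum_int (K : fieldExtType rat) (R : realType)
    (tau : 'I_(\dim {:K}) -> {rmorphism K -> R}) (delta : K) x :
  (forall i j, (forall a, tau i a = tau j a) -> i = j) ->
  codifferent delta -> Lambda tau x -> weighted_sum (tau^~ delta) x \is a Num.int.
Proof.
move=> tau_inj hdelta [a [Oa ->]].
have -> : weighted_sum (tau^~ delta) (minkowski tau a) = ratr (trKQ (delta * a)).
  by rewrite (trKQ_embeddings tau_inj); apply: eq_bigr => i _; rewrite mxE rmorphM.
by have /intrP[z ->] := hdelta a Oa; rewrite ratr_int rpred_int.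
Qed.

Theorem corollary2p2 (K : fieldExtType rat) (n : nat)
  (R : realType) (tau : 'I_n -> {rmorphism K -> R})
  (dimK : \dim {:K} = n)
  (tau_inj : forall i j : 'I_n, (forall a : K, tau i a = tau j a) -> i = j)
  (A : 'rV[R]_n -> Prop)
  (hA : integer_plane (Lambda tau) A)
  (delta : K) (hdelta : codifferent delta) (k : R) (hk : 0 < k)
  (hcont : forall x, A x -> \sum_i tau i delta * x 0 i = k) :
  (exists m : nat,
     integer_distance (Lambda tau) A m /\ exists q : int, k = m%:R * q%:~R) /\
  (k = 1 -> integer_distance (Lambda tau) A 1).
Proof.
subst n.
have [m [d [hID kE]]] := integer_distance_dvd (Lambda_subgroup tau)
  (fun=> codifferent_weighted_sum_int tau_inj hdelta) hA hk hcont.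
split; first by exists m; split=> //; exists d.
move=> k1; move: kE; rewrite k1 -natrM => /esym/eqP.
by rewrite pnatr_eq1 muln_eq1 => /andP[/eqP <-].
Qed.
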